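(* Let $t$ be a positive integer. The number of odd entries on row $n$ of the truncated Pascal triangle $(\mathfrak{a}_t(n,k))$ is a power of two for every nonnegative integer $n$ if and only if $t$ is a power of two (i.e. $t=2^q$ for some integer $q\ge 0$). Moreover, in this case, for every nonnegative integer $n$ the number of odd entries on row $n$ is exactly $\frac12\cdot 2^{d(n+t)}$.
   Context: Fix a positive integer $t$. Let $\mathfrak{a}_t:\mathbb{Z}\times\mathbb{Z}\to\mathbb{Z}$ be the unique function satisfying: (i) $\mathfrak{a}_t(0,0)=1$; (ii) $\mathfrak{a}_t(n,k)=0$ if $n<0$, or $k<0$, or $k>\min\{\lfloor (n-1+t)/2\rfloor, n\}$; (iii) $\mathfrak{a}_t(n,k)=\mathfrak{a}_t(n-1,k-1)+\mathfrak{a}_t(n-1,k)$ for all other integer pairs $(n,k)$ (these necessarily have $n>0$). The truncated Pascal triangle is the array $(\mathfrak{a}_t(n,k))_{0\le k\le n}$; row $n$ consists of the entries $\mathfrak{a}_t(n,k)$ for $0\le k\le n$, and ''the number of odd entries on row $n$'' means the number of $k\in\{0,\dots,n\}$ with $\mathfrak{a}_t(n,k)$ odd. For a nonnegative integer $m$, $d(m)$ denotes the number of nonzero digits (ones) in the base-$2$ representation of $m$ (with $d(0)=0$). *)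

From mathcomp Require Import all_boot.
Set Implicit Arguments. Unset Strict Implicit. Unset Printing Implicit Defensive.

(* Truncated Pascal triangle a_t(n,k), for n, k nonnegative (a_t vanishes
   for negative arguments, so restricting to nat loses nothing).
   a_t(0,k) = [k == 0];
   for n > 0: a_t(n,k) = 0 if k > min((n-1+t)/2, n),
              else a_t(n-1,k-1) + a_t(n-1,k)   (with a_t(n-1,-1) = 0). *)
Fixpoint trunc_pascal (t n k : nat) : nat :=
  match n with
  | 0 => (k == 0)
  | n'.+1 =>
      if k <= minn ((n' + t)./2) n then
        (if k is k'.+1 then trunc_pascal t n' k' else 0) + trunc_pascal t n' k
      else 0
  end.

Definition odd_entries (t n : nat) : nat :=
  count (fun k => odd (trunc_pascal t n k)) (iota 0 n.+1).

Fixpoint bin_digits_aux (fuel m : nat) : nat :=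
  match fuel with
  | 0 => 0
  | f.+1 => if m == 0 then 0 else odd m + bin_digits_aux f m./2
  end.
Definition d (m : nat) : nat := bin_digits_aux m m.

Definition is_pow2 (m : nat) : Prop := exists e : nat, m = 2 ^ e.

From mathcomp Require Import all_boot zify.

(* Below the cut-off line 2k < n + t one has a_t(n,k) = 'C(n,k) - 'C(n,k-t)
   (reflection principle), so a_t(n,k) is congruent mod 2 to the coefficient of
   x^k in (1 + x^t)(1 + x)^n.  That polynomial is palindromic of degree n + t
   with an even middle coefficient, so row n has half as many odd entries as it
   has odd coefficients.  For t = 2^q, (1 + x^t) = (1 + x)^t mod 2 and
   Glaisher's theorem gives 2^d(n+t) odd coefficients.  Conversely write
   t = 2^a s with s odd: the Frobenius map x |-> x^2 shows that (t, 2^a n) gives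
   as many odd coefficients as (s, n), and for n = 2^s - 1, where (1 + x)^n is
   all ones mod 2, there are exactly 2s of them; hence that row has s odd
   entries, forcing s = 1. *)

Lemma nat_double_cases k : (exists j, k = j.*2) \/ (exists j, k = j.*2.+1).
Proof.
by rewrite -(odd_double_half k); case: (odd k); [right | left]; exists k./2.
Qed.

Lemma half_doubleS j : (j.*2.+1)./2 = j.
Proof. by rewrite /= uphalf_double. Qed.

Lemma odd_bin_doubleS_of_double m :
    (forall k, odd 'C(m.*2, k) = ~~ odd k && odd 'C(m, k./2)) ->
  forall k, odd 'C(m.*2.+1, k) = odd 'C(m, k./2).
Proof.
move=> odd_bin_2m [|k]; first by rewrite !bin0.
rewrite binS oddD !odd_bin_2m.
case: (nat_double_cases k) => [[j ->] | [j ->]].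
- by rewrite half_doubleS doubleK /= odd_double.
- by rewrite -doubleS half_doubleS doubleK odd_double /= odd_double addbF.
Qed.

Lemma odd_bin_double m k : odd 'C(m.*2, k) = ~~ odd k && odd 'C(m, k./2).
Proof.
elim: m k => [|m IHm] k.
  rewrite !bin0n; case: (nat_double_cases k) => [[j ->] | [j ->]].
  - by rewrite odd_double doubleK double_eq0.
  - by rewrite /= odd_double.
case: k => [|k]; first by rewrite !bin0.
rewrite doubleS binS oddD !(odd_bin_doubleS_of_double _ IHm).
case: (nat_double_cases k) => [[j ->] | [j ->]].
- by rewrite half_doubleS doubleK addbb /= odd_double.
- by rewrite -doubleS doubleK half_doubleS odd_double /= binS oddD.
Qed.

Lemma odd_bin_doubleS m k : odd 'C(m.*2.+1, k) = odd 'C(m, k./2).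
Proof. exact: odd_bin_doubleS_of_double m (odd_bin_double m) k. Qed.

Lemma odd_bin_pow2 q k : odd 'C(2 ^ q, k) = (k == 0) || (k == 2 ^ q).
Proof.
elim: q k => [|q IHq] k; first by case: k => [|[|k]].
rewrite expnS mul2n odd_bin_double.
case: (nat_double_cases k) => [[j ->] | [j ->]].
- by rewrite odd_double doubleK IHq double_eq0 -!mul2n eqn_pmul2l.
- by rewrite /= odd_double /=; lia.
Qed.

Lemma odd_bin_pow2_predn b k : odd 'C(2 ^ b - 1, k) = (k < 2 ^ b).
Proof.
elim: b k => [|b IHb] k; first by rewrite subnn bin0n; case: k.
have -> : 2 ^ b.+1 - 1 = (2 ^ b - 1).*2.+1.
  by have := expn_gt0 2 b; rewrite expnS; lia.
by rewrite odd_bin_doubleS IHb ltn_half_double expnS mul2n.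
Qed.

Lemma odd_bin_double_double m k : odd 'C(m.*2, k.*2) = odd 'C(m, k).
Proof. by rewrite odd_bin_double odd_double doubleK. Qed.

Lemma odd_bin_double_doubleS m k : odd 'C(m.*2, k.*2.+1) = false.
Proof. by rewrite odd_bin_double /= odd_double. Qed.

Lemma odd_bin_doubleS_double m k : odd 'C(m.*2.+1, k.*2) = odd 'C(m, k).
Proof. by rewrite odd_bin_doubleS doubleK. Qed.

Lemma odd_bin_doubleS_doubleS m k : odd 'C(m.*2.+1, k.*2.+1) = odd 'C(m, k).
Proof. by rewrite odd_bin_doubleS half_doubleS. Qed.

Lemma bin_digits_aux_fuel f f' m :
  m <= f -> m <= f' -> bin_digits_aux f m = bin_digits_aux f' m.
Proof.
elim: f f' m => [|f IHf] [|f'] m //= m_le_f m_le_f'; try by have -> : m = 0 by lia.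
by rewrite (IHf f') // leq_half_double; lia.
Qed.

Lemma d_odd_half m : 0 < m -> d m = odd m + d m./2.
Proof.
case: m => // m _; rewrite /d /=; congr (_ + _).
by apply: bin_digits_aux_fuel; rewrite ?leq_uphalf_double; lia.
Qed.

Lemma d_double m : d m.*2 = d m.
Proof. by case: m => // m; rewrite d_odd_half ?double_gt0 // odd_double doubleK. Qed.

Lemma d_doubleS m : d m.*2.+1 = (d m).+1.
Proof. by rewrite d_odd_half // half_doubleS /= odd_double. Qed.

Lemma count_iota_shrink (P : pred nat) L L' : L <= L' ->
    (forall k, L <= k -> ~~ P k) ->
  count P (iota 0 L') = count P (iota 0 L).
Proof.
move=> le_LL' notP; rewrite -(subnKC le_LL') iotaD count_cat -[RHS]addn0.
congr (_ + _); apply/eqP; rewrite -leqn0 leqNgt -has_count.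
by apply/hasPn => k; rewrite mem_iota => /andP[/notP].
Qed.

Lemma count_iota_double (P : pred nat) N : count P (iota 0 N.*2) =
  count (fun j => P j.*2) (iota 0 N) + count (fun j => P j.*2.+1) (iota 0 N).
Proof.
elim: N => [|N IHN] //.
rewrite -addn1 iotaD doubleD iotaD !count_cat IHN /= !add0n !addn0 -!addnA.
by congr (_ + _); rewrite addnCA.
Qed.

Lemma count_odd_bin m : count (fun k => odd 'C(m, k)) (iota 0 m.+1) = 2 ^ d m.
Proof.
elim/ltn_ind: m => m IHm.
case: (nat_double_cases m) IHm => [[[|j] ->] | [j ->]] IHm //.
- rewrite -(@count_iota_shrink _ _ (j.+2).*2) => [||k lt_mk]; last 2 first.
  + by lia.
  + by rewrite bin_small.
  rewrite count_iota_double (eq_count (odd_bin_double_double _)).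
  rewrite (eq_count (odd_bin_double_doubleS _)) count_pred0 addn0.
  by rewrite d_double IHm //; lia.
- rewrite -doubleS count_iota_double.
  rewrite (eq_count (odd_bin_doubleS_double _)).
  rewrite (eq_count (odd_bin_doubleS_doubleS _)).
  by rewrite addnn -mul2n IHm ?d_doubleS ?expnS //; lia.
Qed.

Lemma perm_iota_rev N : perm_eq (map (subn N) (iota 0 N.+1)) (iota 0 N.+1).
Proof.
apply: uniq_perm; rewrite ?iota_uniq //.
  by rewrite map_inj_in_uniq ?iota_uniq // => x y; rewrite !mem_iota; lia.
move=> x; rewrite mem_iota; apply/mapP/idP => [[y] | le_xN].
  by rewrite mem_iota => ? ->; lia.
by exists (N - x); rewrite ?mem_iota; lia.
Qed.

Lemma count_iota_sym_half (P : pred nat) N :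
    (forall k, k <= N -> P (N - k) = P k) -> (forall k, k.*2 = N -> ~~ P k) ->
  2 * count (fun k => P k && (k.*2 < N)) (iota 0 N.+1) = count P (iota 0 N.+1).
Proof.
move=> P_sym notP_mid.
have upper : count (fun k => P k && (N < k.*2)) (iota 0 N.+1) =
             count (fun k => P k && (k.*2 < N)) (iota 0 N.+1).
  rewrite -(permP (perm_iota_rev N)) count_map.
  apply: eq_in_count => k; rewrite mem_iota /= => lt_kN.
  by rewrite P_sym; [congr (_ && _); apply/idP/idP | ]; lia.
have split_mid : count P (iota 0 N.+1) =
    count (fun k => P k && (k.*2 < N)) (iota 0 N.+1) +
    count (fun k => P k && (N < k.*2)) (iota 0 N.+1).
  rewrite -size_filter -(count_predC (fun k => k.*2 < N)) !count_filter.
  congr (_ + _); apply: eq_count => k /=; rewrite andbC //.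
  case: ltngtP => [|//|mid]; first by rewrite andbF.
  by rewrite (negbTE (notP_mid k mid)).
by rewrite split_mid upper mul2n addnn.
Qed.

(* [shift_bin t n k] is the coefficient of x^k in x^t (1 + x)^n, so [odd_coef]
   is the parity of the coefficients of (1 + x^t)(1 + x)^n. *)
Definition shift_bin t n k := if t <= k then 'C(n, k - t) else 0.

Definition odd_coef t n k := odd ('C(n, k) + shift_bin t n k).

Definition trunc_support t n k := (k <= n) && (k.*2 < n + t).

Lemma shift_binS t n k : shift_bin t n.+1 k.+1 = shift_bin t n k + shift_bin t n k.+1.
Proof.
rewrite /shift_bin; case: (leqP t k) => [le_tk | lt_kt].
  by rewrite leqW // subSn // binS addnC.
have [-> | ne_tk] := eqVneq t k.+1; first by rewrite leqnn subnn !bin0.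
by rewrite leqNgt ltn_neqAle eq_sym ne_tk lt_kt.
Qed.

Lemma odd_coef_sym t n k : k <= n + t -> odd_coef t n (n + t - k) = odd_coef t n k.
Proof.
move=> le_k_nt; rewrite /odd_coef [in RHS]addnC /shift_bin; congr (odd (_ + _)).
  case: (leqP t k) => [le_tk | lt_kt]; last by rewrite bin_small //; lia.
  by rewrite (_ : n + t - k = n - (k - t)) ?bin_sub //; lia.
case: (leqP k n) => [le_kn | lt_nk]; last by rewrite ifF ?bin_small //; lia.
rewrite ifT; last by lia.
by rewrite (_ : n + t - k - t = n - k) ?bin_sub //; lia.
Qed.

Lemma odd_coef_mid t n k : k.*2 = n + t -> ~~ odd_coef t n k.
Proof.
move=> mid; rewrite /odd_coef /shift_bin; case: (leqP t k) => [le_tk | lt_kt].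
  by rewrite (_ : k - t = n - k) ?bin_sub ?addnn ?odd_double //; lia.
by rewrite bin_small ?addn0 //; lia.
Qed.

Lemma odd_coef_out t n k : n + t < k -> ~~ odd_coef t n k.
Proof.
move=> lt_nt_k; rewrite /odd_coef /shift_bin bin_small; last by lia.
by case: ifP => // _; rewrite bin_small //; lia.
Qed.

Lemma odd_coef_gap t n k : n < k < t -> ~~ odd_coef t n k.
Proof.
by case/andP=> lt_nk lt_kt; rewrite /odd_coef /shift_bin leqNgt lt_kt bin_small.
Qed.

Section TruncatedPascal.

Variable t : nat.
Hypothesis t_gt0 : 0 < t.

Lemma shift_bin0 n : shift_bin t n 0 = 0.
Proof. by rewrite /shift_bin leqNgt t_gt0. Qed.

Lemma trunc_pascal_cond n k :
  (k <= minn ((n + t)./2) n.+1) = trunc_support t n.+1 k.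
Proof.
by rewrite leq_min geq_half_double andbC /trunc_support; congr (_ && _); lia.
Qed.

Lemma trunc_pascal_out n k : ~~ trunc_support t n k -> trunc_pascal t n k = 0.
Proof.
case: n => [|n] /=; first by case: k => //; rewrite /trunc_support /= t_gt0.
by rewrite trunc_pascal_cond => /negbTE->.
Qed.

Lemma shift_bin_boundary n k :
  trunc_support t n.+1 k -> ~~ trunc_support t n k -> shift_bin t n k = 'C(n, k).
Proof.
rewrite /trunc_support /shift_bin => /andP[le_kn1 lt_2k] not_supp.
case: (leqP k n) => [le_kn | lt_nk].
  have mid : k.*2 = n + t by move: not_supp; rewrite le_kn /=; lia.
  have -> : t <= k by lia.
  by rewrite (_ : k - t = n - k) ?bin_sub //; lia.
by rewrite ifF ?bin_small //; lia.
Qed.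

Lemma trunc_pascal_add_shift n k :
  trunc_support t n k -> trunc_pascal t n k + shift_bin t n k = 'C(n, k).
Proof.
elim: n k => [|n IHn] k supp.
  by move: supp => /andP[]; rewrite leqn0 => /eqP-> _; rewrite shift_bin0.
rewrite /= trunc_pascal_cond supp.
case: k supp => [|k] supp.
  have supp0 : trunc_support t n 0 by rewrite /trunc_support addn_gt0 t_gt0 orbT.
  by move: (IHn 0 supp0); rewrite !shift_bin0 !bin0 !addn0.
have supp_k : trunc_support t n k.
  by move: supp; rewrite /trunc_support => /andP[? ?]; apply/andP; split; lia.
rewrite shift_binS binS -(IHn k supp_k).
have [supp_k1 | not_supp_k1] := boolP (trunc_support t n k.+1).
  by rewrite -(IHn k.+1 supp_k1); lia.
rewrite (trunc_pascal_out _ _ not_supp_k1).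
by rewrite (shift_bin_boundary _ _ supp not_supp_k1); lia.
Qed.

Lemma odd_trunc_pascal n k :
  odd (trunc_pascal t n k) = odd_coef t n k && (k.*2 < n + t).
Proof.
have [supp | not_supp] := boolP (trunc_support t n k).
  rewrite (andP supp).2 andbT /odd_coef -(trunc_pascal_add_shift _ _ supp) -addnA.
  by rewrite addnn oddD odd_double addbF.
rewrite trunc_pascal_out //; apply/esym/negbTE/andP => -[odd_c lt_2k].
move: not_supp; rewrite /trunc_support lt_2k andbT -ltnNge => lt_nk.
by move: odd_c; apply/negP/odd_coef_gap; rewrite lt_nk; lia.
Qed.

Lemma odd_entries_odd_coef n : odd_entries t n =
  count (fun k => odd_coef t n k && (k.*2 < n + t)) (iota 0 (n + t).+1).
Proof.
rewrite /odd_entries (eq_count (odd_trunc_pascal n)).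
rewrite (@count_iota_shrink _ n.+1) //.
  by rewrite ltnS leq_addr.
move=> k lt_nk; apply/nandP; case: (ltnP k.*2 (n + t)) => lt_2k; [left | by right].
by apply: odd_coef_gap; rewrite lt_nk; lia.
Qed.

End TruncatedPascal.

Definition odd_coef_count t n := count (odd_coef t n) (iota 0 (n + t).+1).

Lemma odd_coef_count_ext t n L :
  n + t < L -> count (odd_coef t n) (iota 0 L) = odd_coef_count t n.
Proof. by move=> lt_ntL; apply: count_iota_shrink => // k; apply: odd_coef_out. Qed.

Lemma twice_odd_entries t n : 0 < t -> 2 * odd_entries t n = odd_coef_count t n.
Proof.
move=> t_gt0; rewrite odd_entries_odd_coef //; apply: count_iota_sym_half.
  exact: odd_coef_sym.
exact: odd_coef_mid.
Qed.

Lemma odd_coef_pow2 q n k : odd_coef (2 ^ q) n k = odd 'C(n + 2 ^ q, k).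
Proof.
have pow2_gt0 : 0 < 2 ^ q by rewrite expn_gt0.
elim: n k => [|n IHn] [|k]; rewrite /odd_coef ?(shift_bin0 _ pow2_gt0) ?bin0 //.
  rewrite add0n odd_bin_pow2 /shift_bin bin0n.
  case: (ltngtP (2 ^ q) k.+1) => [lt_qk | // | <-].
    by rewrite bin0n subn_eq0 leqNgt lt_qk.
  by rewrite subnn bin0 eqn0Ngt pow2_gt0.
rewrite addSn !binS shift_binS [X in _ + X]addnC addnACA oddD.
by rewrite [RHS]oddD -!IHn.
Qed.

Lemma odd_coef_count_pow2 q n : odd_coef_count (2 ^ q) n = 2 ^ d (n + 2 ^ q).
Proof. by rewrite /odd_coef_count (eq_count (odd_coef_pow2 q n)) count_odd_bin. Qed.

Lemma odd_coef_double_double t n k : odd_coef t.*2 n.*2 k.*2 = odd_coef t n k.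
Proof.
rewrite /odd_coef /shift_bin leq_double !oddD odd_bin_double_double.
by case: ifP => // _; rewrite -doubleB odd_bin_double_double.
Qed.

Lemma odd_coef_double_doubleS t n k : odd_coef t.*2 n.*2 k.*2.+1 = false.
Proof.
rewrite /odd_coef /shift_bin leq_Sdouble oddD odd_bin_double_doubleS.
by case: ifP => // le_tk; rewrite subSn ?leq_double // -doubleB odd_bin_double_doubleS.
Qed.

Lemma odd_coef_count_double t n : odd_coef_count t.*2 n.*2 = odd_coef_count t n.
Proof.
rewrite -(@odd_coef_count_ext _ _ (n + t).+1.*2); last by rewrite -doubleD.
rewrite count_iota_double (eq_count (odd_coef_double_double t n)).
by rewrite (eq_count (odd_coef_double_doubleS t n)) count_pred0 addn0.
Qed.

Lemma odd_coef_count_pow2_mul a t n :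
  odd_coef_count (2 ^ a * t) (2 ^ a * n) = odd_coef_count t n.
Proof.
by elim: a => [|a IHa]; rewrite ?mul1n // expnS -!mulnA !mul2n odd_coef_count_double.
Qed.

Lemma odd_coef_count_pow2_predn s b :
  0 < s -> s < 2 ^ b -> odd_coef_count s (2 ^ b - 1) = s.*2.
Proof.
move=> s_gt0 lt_s_2b; rewrite /odd_coef_count.
have coefE k : odd_coef s (2 ^ b - 1) k = (k < 2 ^ b) (+) ((s <= k) && (k - s < 2 ^ b)).
  by rewrite /odd_coef /shift_bin; case: (s <= k); rewrite oddD !odd_bin_pow2_predn ?addbF.
rewrite (eq_count coefE) (_ : (2 ^ b - 1 + s).+1 = s + (2 ^ b - s) + s); last by lia.
rewrite !iotaD !count_cat !add0n.
rewrite (@eq_in_count _ _ predT (iota 0 s)) => [|k]; last first.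
  by rewrite mem_iota; case: ltnP; case: leqP; case: ltnP => //=; lia.
rewrite (@eq_in_count _ _ pred0 (iota s _)) => [|k]; last first.
  by rewrite mem_iota; case: ltnP; case: leqP; case: ltnP => //=; lia.
rewrite (@eq_in_count _ _ predT (iota (s + _) s)) => [|k]; last first.
  by rewrite mem_iota; case: ltnP; case: leqP; case: ltnP => //=; lia.
by rewrite !count_predT count_pred0 !size_iota addn0 addnn.
Qed.

Lemma is_pow2_of_double x e : 2 * x = 2 ^ e -> is_pow2 x.
Proof. by case: e => [|e]; rewrite ?expnS => eq_x; [lia | exists e; lia]. Qed.

Lemma odd_entries_pow2_witness t : 0 < t ->
  odd_entries t (2 ^ logn 2 t * (2 ^ t`_2^' - 1)) = t`_2^'.
Proof.
move=> t_gt0; set s := t`_2^'.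
have t_eq : 2 ^ logn 2 t * s = t by rewrite -p_part partnC.
apply: double_inj; rewrite -mul2n twice_odd_entries // -{1}t_eq.
rewrite odd_coef_count_pow2_mul odd_coef_count_pow2_predn ?part_gt0 //.
exact: ltn_expl.
Qed.

Lemma is_pow2_of_odd_entries t : 0 < t ->
  (forall n, is_pow2 (odd_entries t n)) -> is_pow2 t.
Proof.
move=> t_gt0 pow2_rows.
have [e] := pow2_rows (2 ^ logn 2 t * (2 ^ t`_2^' - 1)).
rewrite odd_entries_pow2_witness // => odd_part_eq.
have : odd t`_2^' by rewrite odd_2'nat part_pnat.
rewrite odd_part_eq oddX orbF => /eqP e0.
by exists (logn 2 t); rewrite -p_part -[LHS](partnC 2 t_gt0) odd_part_eq e0 muln1.
Qed.

Theorem theorem4p3 (t : nat) (ht : 0 < t) :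
  ((forall n : nat, is_pow2 (odd_entries t n)) <-> is_pow2 t) /\
  (is_pow2 t -> forall n : nat, 2 * odd_entries t n = 2 ^ d (n + t)).
Proof.
have row_count : is_pow2 t -> forall n, 2 * odd_entries t n = 2 ^ d (n + t).
  by move=> [q ->] n; rewrite twice_odd_entries ?expn_gt0 // odd_coef_count_pow2.
split=> //; split; first exact: is_pow2_of_odd_entries.
by move=> pow2_t n; apply: is_pow2_of_double (row_count pow2_t n).
Qed.
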